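(* Let $n\ge1$ and let $(P_n,A_n,\lambda)$ be the Gelfand–Tsetlin marked poset with marking $\lambda_0\ge\lambda_1\ge\cdots\ge\lambda_n$. Then: (1) if $\lambda_0>\lambda_1>\cdots>\lambda_n$, then $(P_n,A_n,\lambda)$ is a regular marked poset; (2) $\operatorname{St}(P_n)=\{p_{i,j}: 1\le i<j<n\}$.
   Context: $P_n$ is the poset on $\{p_{i,j}: 0\le i\le j\le n\}$ whose cover relations are exactly $p_{i-1,j}\to p_{i,j}\to p_{i-1,j-1}$ for $1\le i\le j\le n$, where $q\to p$ means $p$ covers $q$ (i.e. $q\prec p$ with nothing strictly between). $A_n=\{p_{0,0},p_{0,1},\dots,p_{0,n}\}$, and the marking $\lambda:A_n\to\mathbb{Z}_{\ge0}$ is $\lambda(p_{0,k})=\lambda_k$. For $p\in P$, let $p\to$ denote the set of elements covering $p$ and $\rightsquigarrow p$ the set of maximal chains ending in $p$, i.e. chains $r_0\to\cdots\to r_k=p$ with $r_0$ minimal. $p$ is a star element if $|p\to|\ge2$ and $|\rightsquigarrow p|\ge2$; $\operatorname{St}(P)$ is the set of star elements. A marked poset $(P,A,\lambda)$ ($A$ containing all extremal elements, $\lambda:A\to\mathbb{Z}_{\ge0}$) is regular if: (1) there are no $a,b\in A$ with $a\to b$; (2) $\lambda_a\ne\lambda_b$ for $a\ne b\in A$; (3) if $a\in A$, $x\in P\setminus A$, $a\to x$, there is no $b\in A$ with $b\prec x$ and $\lambda_a<\lambda_b$; (4) if $a\in A$, $x\in P\setminus A$, $x\to a$, there is no $b\in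 A$ with $x\prec b$ and $\lambda_b<\lambda_a$. *)

From mathcomp Require Import all_boot.
Set Implicit Arguments. Unset Strict Implicit. Unset Printing Implicit Defensive.

Definition GT (n : nat) := {x : 'I_n.+1 * 'I_n.+1 | (x.1 <= x.2)%N}.

Section GTPoset.
Variable n : nat.

Definition gi (p : GT n) : nat := (val p).1.
Definition gj (p : GT n) : nat := (val p).2.

(* generating edges: gt_edge q p  means  q -> p  in the paper, i.e.
   q = p_{i-1,j}, p = p_{i,j}   or   q = p_{i,j}, p = p_{i-1,j-1}. *)
Definition gt_edge (q p : GT n) : bool :=
  ((gi p == (gi q).+1) && (gj p == gj q)) ||
  ((gi q == (gi p).+1) && (gj q == (gj p).+1)).

Definition gt_le (q p : GT n) : bool := connect gt_edge q p.
Definition gt_lt (q p : GT n) : bool := (q != p) && gt_le q p.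

Definition covers (q p : GT n) : bool :=
  gt_lt q p && ~~ [exists r, gt_lt q r && gt_lt r p].

Definition minimalb (p : GT n) : bool := [forall q, ~~ gt_lt q p].
Definition maximalb (p : GT n) : bool := [forall q, ~~ gt_lt p q].

Definition up_covers (p : GT n) : {set GT n} := [set q | covers p q].

Definition maxchain_to (p : GT n) (s : seq (GT n)) : bool :=
  if s is r0 :: t then [&& minimalb r0, path covers r0 t & last r0 t == p]
  else false.

(* star element: |p ->| >= 2 and |~> p| >= 2 *)
Definition star (p : GT n) : Prop :=
  (2 <= #|up_covers p|)%N /\
  exists s1 s2, [/\ s1 != s2, maxchain_to p s1 & maxchain_to p s2].

Definition A_n : pred (GT n) := fun p => gi p == 0%N.
Definition gt_mark (lam : nat -> nat) (p : GT n) : nat := lam (gj p).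

(* regular marked poset (P_n, A, mk); mk is only relevant on A *)
Definition regular (A : pred (GT n)) (mk : GT n -> nat) : Prop :=
  [/\
      (forall x, minimalb x || maximalb x -> x \in A),
      (forall a b, a \in A -> b \in A -> ~~ covers a b),
      (forall a b, a \in A -> b \in A -> a != b -> mk a != mk b),
      (forall a x b, a \in A -> x \notin A -> covers a x ->
         b \in A -> gt_lt b x -> ~~ (mk a < mk b)%N) &
      (forall a x b, a \in A -> x \notin A -> covers x a ->
         b \in A -> gt_lt x b -> ~~ (mk b < mk a)%N)].

End GTPoset.

From mathcomp Require Import all_boot.
From mathcomp Require Import zify.
Set Implicit Arguments. Unset Strict Implicit. Unset Printing Implicit Defensive.

(* The rank [gi p + 2 (n - gj p)] increases by exactly one along each
   generating edge, so the cover relation is the edge relation and every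
   element is the top of a maximal chain.  The upper covers of [p_{i,j}] are
   [p_{i+1,j}] and [p_{i-1,j-1}], present together exactly when [0 < i < j];
   its lower covers are [p_{i-1,j}] and [p_{i+1,j+1}].  Two distinct lower
   covers yield two maximal chains, whereas on the border [j = n] only
   [p_{i-1,n}] lies below, so the maximal chain is unique.  Regularity of the
   marking is a comparison of second indices, which the rank controls. *)

Lemma antitone_leq_in (f : nat -> nat) (n : nat) :
  (forall k, k < n -> f k.+1 <= f k) -> forall j k, j <= k <= n -> f k <= f j.
Proof.
move=> f_dec j k /andP[le_jk le_kn].
apply: (@homo_leq_in _ [pred k | k <= n] f (fun x y => y <= x)) => //.
- by move=> y x z le_yx le_zy; apply: leq_trans le_zy le_yx.
- by move=> lo hi _ hi_n mid ?; rewrite !inE /= in hi_n *; lia.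
- by move=> i _; rewrite inE => /f_dec.
- by rewrite inE (leq_trans le_jk).
Qed.

Lemma antitone_ltn_in (f : nat -> nat) (n : nat) :
  (forall k, k < n -> f k.+1 < f k) -> forall j k, j < k <= n -> f k < f j.
Proof.
move=> f_dec j k /andP[lt_jk le_kn].
apply: (@homo_ltn_in _ [pred k | k <= n] f (fun x y => y < x)) => //.
- by move=> y x z lt_yx lt_zy; apply: ltn_trans lt_zy lt_yx.
- by move=> lo hi _ hi_n mid ?; rewrite !inE /= in hi_n *; lia.
- by move=> i _; rewrite inE => /f_dec.
- by rewrite inE (leq_trans (ltnW lt_jk)).
Qed.

Section GelfandTsetlinPoset.
Variable n : nat.
Implicit Types p q x : GT n.

Lemma gi_le_gj p : gi p <= gj p.
Proof. exact: valP p. Qed.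

Lemma gj_le_n p : gj p <= n.
Proof. by rewrite -ltnS; apply: ltn_ord. Qed.

Lemma GT_inj p q : gi p = gi q -> gj p = gj q -> p = q.
Proof.
case: p q => [[a b] ?] [[c d] ?]; rewrite /gi /gj /= => e1 e2.
by apply: val_inj; congr pair; apply: val_inj.
Qed.

Lemma GT_exists i j : i <= j -> j <= n -> {p : GT n | gi p = i /\ gj p = j}.
Proof.
move=> le_ij le_jn.
have lt_i : i < n.+1 by lia.
have lt_j : j < n.+1 by lia.
by exists (exist _ (Ordinal lt_i, Ordinal lt_j) le_ij).
Qed.

Lemma gt_edgeP q p :
  reflect ((gi p = (gi q).+1 /\ gj p = gj q) \/ (gi q = (gi p).+1 /\ gj q = (gj p).+1))
          (gt_edge q p).
Proof.
apply: (iffP orP) => -[] /=.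
- by move=> /andP[/eqP ? /eqP ?]; left.
- by move=> /andP[/eqP ? /eqP ?]; right.
- by move=> [-> ->]; left; rewrite !eqxx.
- by move=> [-> ->]; right; rewrite !eqxx.
Qed.

Definition gt_rank p : nat := gi p + 2 * (n - gj p).

Lemma gt_edge_rank q p : gt_edge q p -> gt_rank p = (gt_rank q).+1 /\ gj p <= gj q.
Proof.
have := gj_le_n p; have := gj_le_n q; have := gi_le_gj p; have := gi_le_gj q.
by rewrite /gt_rank => ? ? ? ? /gt_edgeP [] [? ?]; lia.
Qed.

Lemma path_rank q s : path (@gt_edge n) q s ->
  gt_rank (last q s) = gt_rank q + size s /\ gj (last q s) <= gj q.
Proof.
elim: s q => [|r s IH] q /=; first by rewrite addn0.
by case/andP => /gt_edge_rank [? ?] /IH [? ?]; split; lia.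
Qed.

Lemma gt_lt_rank q p : gt_lt q p -> gt_rank q < gt_rank p /\ gj p <= gj q.
Proof.
case/andP => neq_qp /connectP [[|r s] path_s eq_p]; first by rewrite eq_p eqxx in neq_qp.
by have := path_rank path_s; rewrite -eq_p /= => -[-> ?]; split; lia.
Qed.

Lemma path_gt_lt q r s : path (@gt_edge n) q (r :: s) -> gt_lt q (last r s).
Proof.
move=> path_s; have [rank_last _] := path_rank path_s.
apply/andP; split; last by apply/connectP; exists (r :: s).
by apply/eqP => eq_q; rewrite /= -eq_q in rank_last; lia.
Qed.

Lemma gt_edge_lt q p : gt_edge q p -> gt_lt q p.
Proof. by move=> edge_qp; apply: (@path_gt_lt q p [::]); rewrite /= edge_qp. Qed.

Lemma coversE q p : covers q p = gt_edge q p.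
Proof.
apply/idP/idP => [|edge_qp].
  case/andP => /andP [neq_qp /connectP [[|r s] path_s eq_p]] /existsPn no_between.
    by rewrite eq_p eqxx in neq_qp.
  case: s path_s eq_p => [|r' s] /= /andP [edge_qr path_r] eq_p; first by rewrite eq_p.
  case/negP: (no_between r); rewrite gt_edge_lt //= eq_p.
  exact: path_gt_lt path_r.
rewrite /covers gt_edge_lt //=; apply/existsPn => r.
have [rank_p _] := gt_edge_rank edge_qp.
by apply/negP => /andP [/gt_lt_rank [? _] /gt_lt_rank [? _]]; lia.
Qed.

Lemma minimal_gi p : minimalb p -> gi p = 0.
Proof.
move/forallP => minimal_p; case gi_p: (gi p) => [|i] //.
have le_ij : i <= gj p by have := gi_le_gj p; lia.
have [q [gi_q gj_q]] := GT_exists le_ij (gj_le_n p).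
by case/negP: (minimal_p q); apply: gt_edge_lt; apply/gt_edgeP; left; lia.
Qed.

Lemma maximal_gi p : maximalb p -> gi p = 0.
Proof.
move/forallP => maximal_p; case gi_p: (gi p) => [|i] //.
have le_ij : i <= (gj p).-1 by have := gi_le_gj p; lia.
have le_jn : (gj p).-1 <= n by have := gj_le_n p; lia.
have [q [gi_q gj_q]] := GT_exists le_ij le_jn.
case/negP: (maximal_p q); apply: gt_edge_lt; apply/gt_edgeP; right.
by have := gi_le_gj p; lia.
Qed.

Lemma rank0_minimal p : gt_rank p = 0 -> minimalb p.
Proof. by move=> rank_p; apply/forallP => q; apply/negP => /gt_lt_rank [? _]; lia. Qed.

Lemma minimal_covers q p : minimalb p -> covers q p = false.
Proof. by move/forallP/(_ q); apply: contraNF => /andP []. Qed.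

Lemma lower_cover_exists p : 0 < gt_rank p -> exists q, covers q p.
Proof.
rewrite /gt_rank => rank_p; have := gi_le_gj p; have := gj_le_n p.
case gi_p: (gi p) => [|i] le_jn le_ij.
- have [|q [gi_q gj_q]] := @GT_exists 1 (gj p).+1 erefl; first lia.
  by exists q; rewrite coversE; apply/gt_edgeP; right; lia.
- have [|q [gi_q gj_q]] := @GT_exists i (gj p) _ le_jn; first lia.
  by exists q; rewrite coversE; apply/gt_edgeP; left; lia.
Qed.

Lemma maxchain_toP p s :
  maxchain_to p s <->
  (s = [:: p] /\ minimalb p) \/
  exists q s', [/\ s = rcons s' p, covers q p & maxchain_to q s'].
Proof.
split.
- case: s => [|r0 t] //= /and3P [minimal_r0 path_t /eqP last_t].
  case/lastP: t path_t last_t => [|t y] /=; first by move=> _ <-; left.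
  rewrite rcons_path last_rcons => /andP [path_t cover_y] <-; right.
  by exists (last r0 t), (r0 :: t); rewrite /= minimal_r0 path_t eqxx.
- case=> [[-> minimal_p] | [q [[|r0 t] [-> cover_qp]]]] //=; first by rewrite minimal_p eqxx.
  case/and3P => minimal_r0 path_t /eqP last_t.
  by rewrite minimal_r0 rcons_path path_t last_t cover_qp last_rcons eqxx.
Qed.

Lemma maxchain_last p s x : maxchain_to p s -> last x s = p.
Proof. by case: s => [|r0 t] //= /and3P [_ _ /eqP]. Qed.

Lemma maxchain_exists p : exists s, maxchain_to p s.
Proof.
have [k] := ubnP (gt_rank p); elim: k p => // k IH p rank_p.
case: (posnP (gt_rank p)) => [/rank0_minimal minimal_p | /lower_cover_exists [q cover_qp]].
  by exists [:: p]; apply/maxchain_toP; left.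
move: (cover_qp); rewrite coversE => /gt_edge_rank [rank_q _].
have [|s chain_q] := IH q; first lia.
by exists (rcons s p); apply/maxchain_toP; right; exists q, s.
Qed.

Lemma maxchains_of_lower_covers q1 q2 p :
  q1 != q2 -> covers q1 p -> covers q2 p ->
  exists s1 s2, [/\ s1 != s2, maxchain_to p s1 & maxchain_to p s2].
Proof.
move=> neq_q cover1 cover2.
have [s1 chain1] := maxchain_exists q1; have [s2 chain2] := maxchain_exists q2.
exists (rcons s1 p), (rcons s2 p); split; last 2 first.
- by apply/maxchain_toP; right; exists q1, s1.
- by apply/maxchain_toP; right; exists q2, s2.
move: neq_q; apply: contra_neq => /rcons_inj [eq_s].
have := maxchain_last q1 chain1; have := maxchain_last q1 chain2.
by rewrite eq_s => -> ->.
Qed.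

Lemma border_cover q p : gj p = n -> covers q p -> gi p = (gi q).+1 /\ gj q = n.
Proof. by have := gj_le_n q; rewrite coversE => ? ? /gt_edgeP [] [? ?]; lia. Qed.

Lemma border_maxchain_uniq p s1 s2 :
  gj p = n -> maxchain_to p s1 -> maxchain_to p s2 -> s1 = s2.
Proof.
have [k] := ubnP (gi p); elim: k p s1 s2 => // k IH p s1 s2 gi_p gj_p.
move=> /maxchain_toP [[-> minimal_p] | [q1 [s1' [-> cover1 chain1]]]]
       /maxchain_toP [[-> minimal_p'] | [q2 [s2' [-> cover2 chain2]]]] //.
- by rewrite minimal_covers in cover2.
- by rewrite minimal_covers in cover1.
have [gi_p1 gj_q1] := border_cover gj_p cover1.
have [gi_p2 gj_q2] := border_cover gj_p cover2.
have eq_q : q1 = q2 by apply: GT_inj; lia.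
by subst q2; rewrite (IH q1 s1' s2') //; lia.
Qed.

Lemma card_up_covers_gt1 p : (1 < #|up_covers p|) = (0 < gi p < gj p).
Proof.
have := gi_le_gj p; have := gj_le_n p => le_jn le_ij.
apply/card_gt1P/idP => [[q1 [q2 []]] | /andP [gi_p lt_ij]].
  have := gi_le_gj q1; have := gi_le_gj q2.
  rewrite !inE !coversE => ? ? /gt_edgeP edge1 /gt_edgeP edge2 neq_q.
  case: edge1 edge2 => [[? ?]|[? ?]] [[? ?]|[? ?]]; try lia;
    by rewrite (@GT_inj q1 q2) ?eqxx in neq_q; lia.
have [q1 [gi_q1 gj_q1]] := GT_exists lt_ij le_jn.
have [||q2 [gi_q2 gj_q2]] := @GT_exists (gi p).-1 (gj p).-1 _ _; [lia | lia |].
exists q1, q2; rewrite !inE !coversE; split.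
- by apply/gt_edgeP; left; lia.
- by apply/gt_edgeP; right; lia.
- by apply/eqP => /(congr1 (@gi n)); lia.
Qed.

Lemma starP p : star p <-> [/\ 1 <= gi p, gi p < gj p & gj p < n].
Proof.
have := gi_le_gj p; have := gj_le_n p => le_jn le_ij.
split.
  rewrite /star card_up_covers_gt1 => -[/andP [gi_p lt_ij] [s1 [s2 [neq_s chain1 chain2]]]].
  split => //; rewrite ltn_neqAle le_jn andbT.
  apply: contraNneq neq_s => gj_p; apply/eqP.
  exact: border_maxchain_uniq gj_p chain1 chain2.
case=> gi_p lt_ij lt_jn; split; first by rewrite card_up_covers_gt1 gi_p.
have [|q1 [gi_q1 gj_q1]] := @GT_exists (gi p).-1 (gj p) _ le_jn; first lia.
have [|q2 [gi_q2 gj_q2]] := @GT_exists (gi p).+1 (gj p).+1 _ lt_jn; first lia.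
apply: (@maxchains_of_lower_covers q1 q2); rewrite ?coversE.
- by apply/eqP => /(congr1 (@gi n)); lia.
- by apply/gt_edgeP; left; lia.
- by apply/gt_edgeP; right; lia.
Qed.

Lemma gt_regular (lam : nat -> nat) :
  (forall k, k < n -> lam k.+1 < lam k) -> regular (@A_n n) (gt_mark lam).
Proof.
move=> lam_dec.
have lam_anti j k : j <= k <= n -> lam k <= lam j.
  by apply: antitone_leq_in => i /lam_dec /ltnW.
rewrite /regular /gt_mark; split.
- by move=> x /orP [/minimal_gi | /maximal_gi]; rewrite unfold_in => ->.
- move=> a b; rewrite !unfold_in coversE => /eqP gi_a /eqP gi_b.
  by apply/negP => /gt_edgeP; lia.
- move=> a b; rewrite !unfold_in => /eqP gi_a /eqP gi_b neq_ab.
  have := gj_le_n a; have := gj_le_n b => le_b le_a.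
  case: (ltngtP (gj a) (gj b)) => [lt_ab | lt_ba | eq_j].
  + by rewrite gtn_eqF // (antitone_ltn_in lam_dec) // lt_ab le_b.
  + by rewrite ltn_eqF // (antitone_ltn_in lam_dec) // lt_ba le_a.
  + by rewrite (GT_inj (etrans gi_a (esym gi_b)) eq_j) eqxx in neq_ab.
- move=> a x b; rewrite !unfold_in coversE => /eqP gi_a _ /gt_edgeP edge_ax.
  move=> _ /gt_lt_rank [_ le_jx]; rewrite -leqNgt lam_anti // gj_le_n andbT.
  by case: edge_ax; lia.
- move=> a x b; rewrite !unfold_in coversE => /eqP gi_a _ /gt_edgeP edge_xa.
  move=> /eqP gi_b /gt_lt_rank [rank_xb _]; rewrite -leqNgt lam_anti // gj_le_n andbT.
  by move: rank_xb; rewrite /gt_rank; have := gj_le_n a; have := gj_le_n b; case: edge_xa; lia.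
Qed.

End GelfandTsetlinPoset.

Theorem lemma6p2 (n : nat) (hn : (1 <= n)%N) (lam : nat -> nat)
  (hlam : forall k, (k < n)%N -> (lam k.+1 <= lam k)%N) :
  ((forall k, (k < n)%N -> (lam k.+1 < lam k)%N) ->
     regular (@A_n n) (gt_mark (n:=n) lam)) /\
  (forall p : GT n, star p <-> [/\ (1 <= gi p)%N, (gi p < gj p)%N & (gj p < n)%N]).
Proof.
by split; [apply: gt_regular | apply: starP].
Qed.
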